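(* Let $V$ be a proper $K$-poset with a single maximal node $m$ (and $\dim V\ge1$). If $d_V(m)>1$, then there exists a proper $K$-poset $U$ which is a splitting of $V$ at $m$, with associated set $\mathcal M\subseteq\max U$, such that $d_{L_U(m_i)}(m_i)=1$ for all $m_i\in\mathcal M$.
   Context: For a poset $U$: $L(u)=L_U(u)=\{v\le u\}$, $G(u)=\{v\ge u\}$, $L(u)^*$, $G(u)^*$ the same sets with $u$ removed; height of $u$ is $\dim L(u)$ (dimension = supremum of chain lengths); $H_i$ = set of height-$i$ nodes; $\operatorname{mub}A$ = minimal common upper bounds of $A$; $[b/c]$ = set of $u$ with $G(u)^*=\{b\}$, $L(u)^*=\{c\}$. A poset with $\dim\le2$ is a $K$-poset if $\min U$, $H_2$ are finite, $\operatorname{mub}\{u,v\}$ is finite for distinct minimal $u,v$, and $[u/w]$ is infinite whenever $u>v>w$ for some $v$; proper if $|[u/w]|\in\{0,|U|\}$ for all maximal $u$, minimal $w$. $\mathcal H_U$ = minimal nodes together with height-one nodes dominating at least two minimal nodes. For a poset $W$ with a single maximal node $n$ and $\dim W\ge1$: $\mathcal H_W^*=\mathcal H_W\setminus\{n\}$; $\Lambda_W\subseteq\mathcal H_W^*$ consists of the nodes of $H_1\cap\mathcal H_W^*$ together with all nodes $v\in\mathcal H_W^*$ with $G(v)\cap H_1\cap\mathcal H_W^*=\emptyset$; and $d_W(n)=|\Lambda_W|$. Splitting: for a poset $V$ with a maximal node $m$ of positive height, $U$ is a splitting of $V$ at $m$ if there are a finite nonempty $\mathcal M\subseteq\max U$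 of positive-height nodes and a surjective order-preserving $\varphi:U\to V$ with $\varphi^{-1}(m)=\mathcal M$, $|\varphi^{-1}(v)|=1$ for $v\ne m$, and such that whenever $\varphi(x')=x\le y$ there is $y'\ge x'$ with $\varphi(y')=y$. *)

From Stdlib Require Import List Arith ProofIrrelevance.
Import ListNotations.


Record Poset := {
  car :> Type;
  le : car -> car -> Prop;
  le_refl : forall x, le x x;
  le_antisym : forall x y, le x y -> le y x -> x = y;
  le_trans : forall x y z, le x y -> le y z -> le x z
}.

Section Notions.
Variable U : Poset.

Definition lt (x y : U) : Prop := le U x y /\ x <> y.

Definition Lset (u : U) : U -> Prop := fun v => le U v u.
Definition Gset (u : U) : U -> Prop := fun v => le U u v.

Definition finite_set (P : U -> Prop) : Prop :=
  exists l : list U, forall x, P x -> In x l.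

Definition equipotent_to_U (P : U -> Prop) : Prop :=
  exists f : {x : U | P x} -> U,
    (forall a b, f a = f b -> a = b) /\ (forall y, exists a, f a = y).

(** Chains, as strictly increasing finite lists;
    the length of a chain with k+1 elements is k. *)
Fixpoint incr (s : list U) : Prop :=
  match s with
  | x :: ((y :: _) as t) => lt x y /\ incr t
  | _ => True
  end.

Definition chain_in (P : U -> Prop) (s : list U) : Prop :=
  incr s /\ (forall x, In x s -> P x).

Definition dim_le (P : U -> Prop) (n : nat) : Prop :=
  forall s, chain_in P s -> length s <= S n.

Definition has_chain (P : U -> Prop) (n : nat) : Prop :=
  exists s, chain_in P s /\ length s = S n.

Definition dim_eq (P : U -> Prop) (n : nat) : Prop :=
  has_chain P n /\ dim_le P n.

Definition setT : U -> Prop := fun _ => True.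

Definition height (u : U) (i : nat) : Prop := dim_eq (Lset u) i.

Definition pos_height (u : U) : Prop := exists i, height u i /\ 0 < i.

Definition minimal (u : U) : Prop := forall v, le U v u -> v = u.
Definition maximal (u : U) : Prop := forall v, le U u v -> v = u.

Definition mub (A : U -> Prop) (x : U) : Prop :=
  (forall a, A a -> le U a x) /\
  (forall y, (forall a, A a -> le U a y) -> le U y x -> y = x).

Definition between (b c : U) (u : U) : Prop :=
  (forall v, (le U u v /\ v <> u) <-> v = b) /\
  (forall v, (le U v u /\ v <> u) <-> v = c).

Definition is_K : Prop :=
  dim_le setT 2 /\
  finite_set minimal /\
  finite_set (fun u => height u 2) /\
  (forall u v, minimal u -> minimal v -> u <> v ->
     finite_set (mub (fun z => z = u \/ z = v))) /\
  (forall u v w, lt v u -> lt w v -> ~ finite_set (between u w)).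

Definition proper : Prop :=
  forall u w, maximal u -> minimal w ->
    (forall x, ~ between u w x) \/ equipotent_to_U (between u w).

Definition in_H (u : U) : Prop :=
  minimal u \/
  (height u 1 /\ exists a b, a <> b /\ minimal a /\ minimal b /\
                             le U a u /\ le U b u).

(** For W (= U here) with single maximal node n:  H_W^*, Lambda_W. *)
Definition in_Hstar (n : U) (u : U) : Prop := in_H u /\ u <> n.

Definition Lambda (n : U) (v : U) : Prop :=
  (height v 1 /\ in_Hstar n v) \/
  (in_Hstar n v /\ ~ (exists w, Gset v w /\ height w 1 /\ in_Hstar n w)).

(** d_W(n) = |Lambda_W| ; we only need the cardinal comparisons
    |Lambda_W| = 1 and |Lambda_W| > 1. *)
Definition d_eq1 (n : U) : Prop :=
  exists x, forall y, Lambda n y <-> y = x.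

Definition d_gt1 (n : U) : Prop :=
  exists x y, x <> y /\ Lambda n x /\ Lambda n y.

End Notions.

Arguments lt {U} x y.
Arguments Lset {U} u v.
Arguments Gset {U} u v.
Arguments finite_set {U} P.
Arguments equipotent_to_U {U} P.
Arguments incr {U} s.
Arguments chain_in {U} P s.
Arguments dim_le {U} P n.
Arguments has_chain {U} P n.
Arguments dim_eq {U} P n.
Arguments height {U} u i.
Arguments pos_height {U} u.
Arguments minimal {U} u.
Arguments maximal {U} u.
Arguments mub {U} A x.
Arguments between {U} b c u.
Arguments in_H {U} u.
Arguments in_Hstar {U} n u.
Arguments Lambda {U} n v.
Arguments d_eq1 {U} n.
Arguments d_gt1 {U} n.

Section Sub.
Variable U : Poset.
Variable P : U -> Prop.

Definition sub_le (a b : {x : U | P x}) : Prop := le U (proj1_sig a) (proj1_sig b).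

Lemma sub_refl : forall a, sub_le a a.
Proof. intros [x Hx]; apply le_refl. Qed.

Lemma sub_antisym : forall a b, sub_le a b -> sub_le b a -> a = b.
Proof.
  intros [x Hx] [y Hy]; unfold sub_le; simpl; intros H1 H2.
  assert (E := le_antisym U x y H1 H2); subst y.
  f_equal; apply proof_irrelevance.
Qed.

Lemma sub_trans : forall a b c, sub_le a b -> sub_le b c -> sub_le a c.
Proof. intros [x Hx] [y Hy] [z Hz]; unfold sub_le; simpl; apply le_trans. Qed.

Definition subposet : Poset :=
  {| car := {x : U | P x}; le := sub_le;
     le_refl := sub_refl; le_antisym := sub_antisym; le_trans := sub_trans |}.
End Sub.

Definition Lposet (U : Poset) (u : U) : Poset := subposet U (Lset u).
Definition Ltop (U : Poset) (u : U) : Lposet U u := exist (Lset u) u (le_refl U u).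

Definition is_splitting (V : Poset) (m : V) (U : Poset)
  (M : U -> Prop) (phi : U -> V) : Prop :=
  maximal m /\ pos_height m /\
  finite_set M /\ (exists x, M x) /\
  (forall x, M x -> maximal x /\ pos_height x) /\
  (forall x y, le U x y -> le V (phi x) (phi y)) /\
  (forall y, exists x, phi x = y) /\
  (forall x, phi x = m <-> M x) /\
  (forall v, v <> m -> exists x, forall y, phi y = v <-> y = x) /\
  (forall x' y, le V (phi x') y -> exists y', le U x' y' /\ phi y' = y).
Arguments Lposet {U} u.
Arguments Ltop {U} u.
Arguments is_K U : clear implicits.

(* Every node of [V] other than [m] is minimal, branching (of height one above
   two minimal nodes; such nodes belong to Lambda), or pendant, i.e. in some
   [[m/w]] with [w] minimal.  Replace [m] by one copy [m_l] for each [l] in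
   Lambda, put below [m_l] the nodes below [l], and distribute every pendant set
   [[m/w]] among the copies [m_l] with [w <= l] so that each copy receives [|V|]
   of its nodes.  This is possible because properness gives [|[m/w]| = |V|] and,
   as soon as two such [l] exist, one of them is branching and the two infinite
   pendant sets below it are disjoint subsets of [V] of size [|V|].  The pieces
   of [[m/w]] are then the sets [[m_l/w]], of size [|V| = |U|], and all nodes of
   H below [m_l] lie below [l], which is the only node of Lambda there. *)

From Stdlib Require Import List Lia Classical ClassicalEpsilon ProofIrrelevance FinFun.
Import ListNotations.

Lemma sig_eq (A : Type) (Q : A -> Prop) (a b : {x | Q x}) :
  proj1_sig a = proj1_sig b -> a = b.
Proof.
  destruct a as [a Ha], b as [b Hb]; simpl; intros <-.
  f_equal; apply proof_irrelevance.
Qed.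

Section PosetFacts.
Context {P : Poset}.

Lemma lt_le_trans (x y z : P) : lt x y -> le P y z -> lt x z.
Proof.
  intros [Hxy Hne] Hyz; split; [eapply le_trans; eauto |].
  intros E; subst z; apply Hne, le_antisym; assumption.
Qed.

Lemma lt_trans (x y z : P) : lt x y -> lt y z -> lt x z.
Proof. intros Hxy [Hyz _]; exact (lt_le_trans _ _ _ Hxy Hyz). Qed.

Lemma minimal_not_lt (u v : P) : minimal u -> ~ lt v u.
Proof. intros Hu [Hvu Hne]; exact (Hne (Hu v Hvu)). Qed.

Lemma not_minimal_lt (u : P) : ~ minimal u -> exists v, lt v u.
Proof.
  intros Hu; apply NNPP; intros Hno; apply Hu; intros v Hvu.
  apply NNPP; intros Hne; apply Hno; exists v; split; assumption.
Qed.

Lemma not_maximal_lt (u : P) : ~ maximal u -> exists v, lt u v.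
Proof.
  intros Hu; apply NNPP; intros Hno; apply Hu; intros v Huv.
  apply NNPP; intros Hne; apply Hno; exists v; split; auto.
Qed.

Lemma chain3_in_Lset (a b u : P) : lt a b -> lt b u -> chain_in (Lset u) [a; b; u].
Proof.
  intros Hab Hbu; split; [simpl; auto |].
  intros x [<- | [<- | [<- | []]]]; unfold Lset.
  - apply (lt_trans _ _ _ Hab Hbu).
  - apply Hbu.
  - apply le_refl.
Qed.

Definition height_one (u : P) : Prop := ~ minimal u /\ forall v, lt v u -> minimal v.

Lemma height_oneP (u : P) : height u 1 <-> height_one u.
Proof.
  split.
  - intros [[s [[Hinc Hin] Hlen]] Hdim].
    destruct s as [| a [| b [| c s]]]; try discriminate.
    destruct Hinc as [Hab _].
    assert (Hau : lt a u) by (apply (lt_le_trans _ b); [| apply Hin]; simpl; auto).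
    split; [intros Hu; exact (minimal_not_lt _ _ Hu Hau) |].
    intros v Hvu; apply NNPP; intros Hv.
    destruct (not_minimal_lt _ Hv) as [t Htv].
    specialize (Hdim _ (chain3_in_Lset _ _ _ Htv Hvu)); simpl in Hdim; lia.
  - intros [Hu Hbelow]; split.
    + destruct (not_minimal_lt _ Hu) as [v Hvu].
      exists [v; u]; split; [split; [simpl; auto |] | reflexivity].
      intros x [<- | [<- | []]]; unfold Lset; [apply Hvu | apply le_refl].
    + intros [| a [| b [| c s]]] [Hinc Hin]; simpl; try lia.
      destruct Hinc as [Hab [Hbc _]].
      assert (Hbu : lt b u) by (apply (lt_le_trans _ c); [| apply Hin]; simpl; auto).
      destruct (minimal_not_lt _ _ (Hbelow _ Hbu) Hab).
Qed.

Lemma height1_not_minimal (u : P) : height u 1 -> ~ minimal u.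
Proof. intros Hu; apply height_oneP in Hu; apply Hu. Qed.

Lemma dim2_no_chain3 (a b c d : P) :
  dim_le (setT P) 2 -> lt a b -> lt b c -> lt c d -> False.
Proof.
  intros Hdim Hab Hbc Hcd.
  assert (Hc : chain_in (setT P) [a; b; c; d]) by (split; [simpl; auto | intros; exact I]).
  specialize (Hdim _ Hc); simpl in Hdim; lia.
Qed.

Lemma height2P (u : P) :
  dim_le (setT P) 2 -> height u 2 <-> exists a b, lt a b /\ lt b u.
Proof.
  intros Hdim; split.
  - intros [[s [[Hinc Hin] Hlen]] _].
    destruct s as [| a [| b [| c [| d s]]]]; try discriminate.
    destruct Hinc as [Hab [Hbc _]].
    exists a, b; split; [exact Hab |].
    apply (lt_le_trans _ c); [exact Hbc | apply Hin; simpl; auto].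
  - intros [a [b [Hab Hbu]]]; split.
    + exists [a; b; u]; split; [apply chain3_in_Lset; assumption | reflexivity].
    + intros s [Hinc _]; apply Hdim; split; [exact Hinc | intros; exact I].
Qed.

Lemma pos_height_not_minimal (u : P) :
  dim_le (setT P) 2 -> ~ minimal u -> pos_height u.
Proof.
  intros Hdim Hu.
  destruct (classic (exists a b, lt a b /\ lt b u)) as [H2 | H2].
  - exists 2; split; [apply height2P; assumption | lia].
  - exists 1; split; [| lia].
    apply height_oneP; split; [exact Hu |].
    intros v Hvu; apply NNPP; intros Hv.
    destruct (not_minimal_lt _ Hv) as [t Htv]; apply H2; exists t, v; auto.
Qed.

Definition two_minimals_below (u : P) : Prop :=
  exists a b, a <> b /\ minimal a /\ minimal b /\ le P a u /\ le P b u.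

Lemma two_minimals_below_not_minimal (u : P) : two_minimals_below u -> ~ minimal u.
Proof.
  intros [a [b [Hab [_ [_ [Hau Hbu]]]]]] Hu.
  apply Hab; rewrite (Hu a Hau), (Hu b Hbu); reflexivity.
Qed.

Lemma in_HP (u : P) : in_H u <-> minimal u \/ height_one u /\ two_minimals_below u.
Proof. unfold in_H; rewrite height_oneP; reflexivity. Qed.

(* Any other node of Lambda would lie strictly below [z], which is then of
   height one and in H. *)
Lemma Lambda_singleton (n z : P) :
  in_Hstar n z -> (forall y, in_Hstar n y -> le P y z) ->
  height z 1 \/ ~ (exists w, Gset z w /\ height w 1 /\ in_Hstar n w) ->
  d_eq1 n.
Proof.
  intros Hz Hbelow Hclause; exists z; intros y; split; [| intros ->].
  - intros Hy; apply NNPP; intros Hne.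
    assert (Hyz : lt y z).
    { split; [| exact Hne]; apply Hbelow; destruct Hy as [[_ Hy] | [Hy _]]; exact Hy. }
    assert (Hz1 : height z 1).
    { destruct Hz as [[Hmin | [Hz1 _]] _]; [| exact Hz1].
      destruct (minimal_not_lt _ _ Hmin Hyz). }
    destruct Hy as [[Hy1 _] | [_ Hno]].
    + apply (height1_not_minimal _ Hy1).
      apply height_oneP in Hz1; apply (proj2 Hz1 _ Hyz).
    + apply Hno; exists z; split; [apply Hyz | split; assumption].
  - destruct Hclause as [Hz1 | Hno]; [left | right]; split; assumption.
Qed.

End PosetFacts.

Lemma incr_map (P Q : Poset) (f : P -> Q) :
  (forall x y, lt x y -> lt (f x) (f y)) -> forall s, incr s -> incr (map f s).
Proof.
  intros Hf s; induction s as [| a [| b s] IH]; simpl; auto.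
  intros [Hab Hs]; split; [apply Hf, Hab | apply IH, Hs].
Qed.

Lemma dim_le_strict_mono (P Q : Poset) (f : P -> Q) n :
  (forall x y, lt x y -> lt (f x) (f y)) -> dim_le (setT Q) n -> dim_le (setT P) n.
Proof.
  intros Hf Hdim s [Hinc _]; rewrite <- (length_map f).
  apply Hdim; split; [apply incr_map; assumption | intros; exact I].
Qed.

Section DownEmbedding.
Context {P Q : Poset} {f : P -> Q}.
Hypothesis f_le : forall x y, le Q (f x) (f y) <-> le P x y.
Hypothesis f_down : forall x q, le Q q (f x) -> exists y, q = f y.

Lemma embed_inj (x y : P) : f x = f y -> x = y.
Proof.
  intros E; apply le_antisym; apply f_le; rewrite E; apply le_refl.
Qed.

Lemma embed_lt (x y : P) : lt (f x) (f y) <-> lt x y.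
Proof.
  unfold lt; rewrite f_le; split; intros [Hle Hne]; split; auto.
  - intros ->; auto.
  - intros E; apply Hne, embed_inj, E.
Qed.

Lemma embed_minimal (x : P) : minimal (f x) <-> minimal x.
Proof.
  split.
  - intros Hx v Hv; apply embed_inj, Hx, f_le, Hv.
  - intros Hx q Hq; destruct (f_down _ _ Hq) as [v ->]; f_equal; apply Hx, f_le, Hq.
Qed.

Lemma embed_height_one (x : P) : height_one (f x) <-> height_one x.
Proof.
  unfold height_one; rewrite embed_minimal; split; intros [Hx Hbelow]; split; auto.
  - intros v Hv; apply embed_minimal, Hbelow, embed_lt, Hv.
  - intros q Hq; destruct (f_down _ _ (proj1 Hq)) as [v ->].
    apply embed_minimal, Hbelow, embed_lt, Hq.
Qed.

Lemma embed_height1 (x : P) : height (f x) 1 <-> height x 1.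
Proof. rewrite !height_oneP; apply embed_height_one. Qed.

Lemma embed_two_minimals_below (x : P) :
  two_minimals_below (f x) <-> two_minimals_below x.
Proof.
  split.
  - intros [a [b [Hab [Ha [Hb [Hax Hbx]]]]]].
    destruct (f_down _ _ Hax) as [a' ->], (f_down _ _ Hbx) as [b' ->].
    exists a', b'; rewrite <- !embed_minimal, <- !f_le.
    split; [intros ->; auto | auto].
  - intros [a [b [Hab [Ha [Hb [Hax Hbx]]]]]].
    exists (f a), (f b); rewrite !embed_minimal, !f_le.
    split; [intros E; apply Hab, embed_inj, E | auto].
Qed.

Lemma embed_in_H (x : P) : in_H (f x) <-> in_H x.
Proof.
  rewrite !in_HP, embed_minimal, embed_height_one, embed_two_minimals_below.
  reflexivity.
Qed.

End DownEmbedding.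

Section LowerSet.
Variables (P : Poset) (u : P).

Lemma Lposet_le (x y : Lposet u) :
  le P (proj1_sig x) (proj1_sig y) <-> le (Lposet u) x y.
Proof. reflexivity. Qed.

Lemma Lposet_down (x : Lposet u) (v : P) :
  le P v (proj1_sig x) -> exists y : Lposet u, v = proj1_sig y.
Proof.
  intros Hv; exists (exist (Lset u) v (le_trans P _ _ _ Hv (proj2_sig x))); reflexivity.
Qed.

End LowerSet.

Section FiniteSets.
Context {P : Poset}.

Lemma finite_sub (A B : P -> Prop) :
  (forall x, A x -> B x) -> finite_set B -> finite_set A.
Proof. intros HAB [l Hl]; exists l; auto. Qed.

Lemma finite_empty (A : P -> Prop) : (forall x, ~ A x) -> finite_set A.
Proof. intros HA; exists []; intros x Hx; destruct (HA x Hx). Qed.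

Lemma finite_union (A B : P -> Prop) :
  finite_set A -> finite_set B -> finite_set (fun x => A x \/ B x).
Proof.
  intros [l1 H1] [l2 H2]; exists (l1 ++ l2); intros x [Hx | Hx]; apply in_or_app; auto.
Qed.

Lemma finite_bigunion (I : Type) (idx : list I) (F : I -> P -> Prop) :
  (forall i, In i idx -> finite_set (F i)) ->
  finite_set (fun x => exists i, In i idx /\ F i x).
Proof.
  induction idx as [| i idx IH]; intros HF.
  - apply finite_empty; intros x [i [[] _]].
  - apply (finite_sub _ (fun x => F i x \/ exists j, In j idx /\ F j x)).
    + intros x [j [[<- | Hj] Hx]]; [left | right; exists j]; auto.
    + apply finite_union; [apply HF; left; reflexivity |].
      apply IH; intros j Hj; apply HF; right; exact Hj.
Qed.

Lemma finite_image {Q : Poset} (A : P -> Prop) (B : Q -> Prop) (g : P -> Q) :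
  (forall y, B y -> exists x, A x /\ g x = y) -> finite_set A -> finite_set B.
Proof.
  intros Hsurj [l Hl]; exists (map g l); intros y Hy.
  destruct (Hsurj y Hy) as [x [Hx <-]]; apply in_map, Hl, Hx.
Qed.

End FiniteSets.

Definition equipotent (A B : Type) : Prop := exists f : A -> B, Injective f /\ Surjective f.

Lemma equipotent_trans (A B C : Type) : equipotent A B -> equipotent B C -> equipotent A C.
Proof.
  intros [f [Hfi Hfs]] [g [Hgi Hgs]]; exists (fun a => g (f a)); split.
  - intros a b E; apply Hfi, Hgi, E.
  - intros c; destruct (Hgs c) as [b <-], (Hfs b) as [a <-]; exists a; reflexivity.
Qed.

Lemma equipotent_sym (A B : Type) : equipotent A B -> equipotent B A.
Proof.
  intros [f [Hfi Hfs]].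
  exists (fun b => proj1_sig (constructive_indefinite_description _ (Hfs b))); split.
  - intros b b' E.
    destruct (constructive_indefinite_description _ (Hfs b)) as [a <-].
    destruct (constructive_indefinite_description _ (Hfs b')) as [a' <-].
    simpl in E; subst; reflexivity.
  - intros a; exists (f a).
    destruct (constructive_indefinite_description _ (Hfs (f a))) as [a' E]; apply Hfi, E.
Qed.

Lemma equipotent_sig_map (A B : Type) (PA : A -> Prop) (PB : B -> Prop) (f : A -> B) :
  (forall x, PA x -> PB (f x)) ->
  (forall x y, PA x -> PA y -> f x = f y -> x = y) ->
  (forall y, PB y -> exists x, PA x /\ f x = y) ->
  equipotent {x | PA x} {y | PB y}.
Proof.
  intros Hmap Hinj Hsurj.
  exists (fun s => exist PB (f (proj1_sig s)) (Hmap _ (proj2_sig s))); split.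
  - intros [x Hx] [y Hy] E; apply sig_eq; simpl.
    apply Hinj; [exact Hx | exact Hy | exact (f_equal (@proj1_sig _ _) E)].
  - intros [y Hy]; destruct (Hsurj y Hy) as [x [Hx <-]].
    exists (exist PA x Hx); apply sig_eq; reflexivity.
Qed.

Lemma equipotent_sig_ext (A : Type) (PA QA : A -> Prop) :
  (forall x, PA x <-> QA x) -> equipotent {x | PA x} {x | QA x}.
Proof.
  intros H; apply (equipotent_sig_map _ _ _ _ (fun x => x)).
  - intros x; apply H.
  - auto.
  - intros y Hy; exists y; split; [apply H, Hy | reflexivity].
Qed.

Lemma finite_full_of_equipotent {P Q : Poset} (A : P -> Prop) :
  equipotent {x | A x} Q -> finite_set A -> finite_set (setT Q).
Proof.
  intros [f [_ Hf]] [l Hl].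
  exists (flat_map (fun x => match excluded_middle_informative (A x) with
                             | left Hx => [f (exist A x Hx)]
                             | right _ => []
                             end) l).
  intros y _; destruct (Hf y) as [[x Hx] <-].
  apply in_flat_map; exists x; split; [apply Hl, Hx |].
  destruct (excluded_middle_informative (A x)) as [Hx' | Hx']; [| contradiction].
  left; f_equal; apply sig_eq; reflexivity.
Qed.

Section SchroederBernstein.
Variables (A B : Type) (f : A -> B) (g : B -> A).

Definition sb_orbit (a : A) : Prop :=
  exists n a0, ~ (exists b, g b = a0) /\ Nat.iter n (fun x => g (f x)) a0 = a.

Lemma sb_orbit_range (a : A) : ~ sb_orbit a -> exists b, g b = a.
Proof. intros Ha; apply NNPP; intros Hno; apply Ha; exists 0, a; auto. Qed.

(* Koenig's bijection: [f] on the [g \o f]-orbits of points outside the range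
   of [g], the inverse of [g] elsewhere. *)
Definition sb_map (a : A) : B :=
  match excluded_middle_informative (sb_orbit a) with
  | left _ => f a
  | right Ha => proj1_sig (constructive_indefinite_description _ (sb_orbit_range a Ha))
  end.

Lemma sb_map_inv (a : A) (Ha : ~ sb_orbit a) : g (sb_map a) = a.
Proof.
  unfold sb_map; destruct (excluded_middle_informative (sb_orbit a)) as [H | H].
  - contradiction.
  - destruct (constructive_indefinite_description _ (sb_orbit_range a H)); assumption.
Qed.

Lemma sb_orbit_step (a : A) : sb_orbit a -> sb_orbit (g (f a)).
Proof. intros [n [a0 [Ha0 E]]]; exists (S n), a0; simpl; rewrite E; auto. Qed.

Hypotheses (Hf : Injective f) (Hg : Injective g).

Lemma sb_map_injective : Injective sb_map.
Proof.
  assert (Hmixed : forall a a', sb_orbit a -> ~ sb_orbit a' -> sb_map a <> sb_map a').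
  { intros a a' Ha Ha' E; apply Ha'; rewrite <- (sb_map_inv a' Ha'), <- E.
    unfold sb_map; destruct (excluded_middle_informative (sb_orbit a)); [| contradiction].
    apply sb_orbit_step, Ha. }
  intros a a' E.
  destruct (classic (sb_orbit a)) as [Ha | Ha], (classic (sb_orbit a')) as [Ha' | Ha'].
  - unfold sb_map in E.
    destruct (excluded_middle_informative (sb_orbit a)); [| contradiction].
    destruct (excluded_middle_informative (sb_orbit a')); [apply Hf, E | contradiction].
  - destruct (Hmixed _ _ Ha Ha' E).
  - destruct (Hmixed _ _ Ha' Ha (eq_sym E)).
  - rewrite <- (sb_map_inv a Ha), <- (sb_map_inv a' Ha'), E; reflexivity.
Qed.

Lemma sb_map_surjective : Surjective sb_map.
Proof.
  intros b; destruct (classic (sb_orbit (g b))) as [[[| n] [a0 [Ha0 E]]] | Hb].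
  - destruct Ha0; exists b; symmetry; exact E.
  - simpl in E; apply Hg in E; subst b.
    exists (Nat.iter n (fun x => g (f x)) a0); unfold sb_map.
    destruct (excluded_middle_informative _) as [_ | Hno]; [reflexivity |].
    destruct Hno; exists n, a0; split; [exact Ha0 | reflexivity].
  - exists (g b); apply Hg, sb_map_inv, Hb.
Qed.

End SchroederBernstein.

Lemma schroeder_bernstein (A B : Type) (f : A -> B) (g : B -> A) :
  Injective f -> Injective g -> equipotent A B.
Proof.
  intros Hf Hg; exists (sb_map A B f g); split;
    [exact (sb_map_injective A B f g Hf) | exact (sb_map_surjective A B f g Hg)].
Qed.

Definition two_disjoint_copies (T : Type) : Prop :=
  exists X Y : T -> Prop, (forall x, X x -> Y x -> False) /\
    equipotent {x | X x} T /\ equipotent {x | Y x} T.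

Lemma equipotent_complement (T : Type) (X Y : T -> Prop) :
  (forall x, X x -> Y x -> False) -> equipotent {x | Y x} T ->
  equipotent {x | ~ X x} T.
Proof.
  intros Hdisj HY; destruct (equipotent_sym _ _ HY) as [e [He _]].
  apply (schroeder_bernstein _ _ (@proj1_sig _ _)
           (fun t => exist (fun x => ~ X x) (proj1_sig (e t))
                       (fun HX => Hdisj _ HX (proj2_sig (e t))))).
  - intros a b E; apply sig_eq, E.
  - intros a b E; apply He, sig_eq; exact (f_equal (@proj1_sig _ _) E).
Qed.

(* Transport the two copies along a bijection [T -> S]. *)
Lemma equipotent_split (T : Type) (S : T -> Prop) :
  two_disjoint_copies T -> equipotent {x | S x} T ->
  exists S1 : T -> Prop, (forall x, S1 x -> S x) /\
    equipotent {x | S1 x} T /\ equipotent {x | S x /\ ~ S1 x} T.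
Proof.
  intros [X [Y [Hdisj [HX HY]]]] HS.
  destruct (equipotent_sym _ _ HS) as [e [He Hes]].
  set (f := fun t => proj1_sig (e t)).
  assert (Hf : forall t t', f t = f t' -> t = t') by (intros t t' E; apply He, sig_eq, E).
  exists (fun x => exists t, X t /\ f t = x); split; [| split].
  - intros x [t [_ <-]]; apply (proj2_sig (e t)).
  - apply (equipotent_trans _ {t | X t}); [| exact HX].
    apply equipotent_sym, (equipotent_sig_map _ _ _ _ f); [| auto |].
    + intros t Ht; exists t; auto.
    + intros x [t [Ht <-]]; exists t; auto.
  - apply (equipotent_trans _ {t | ~ X t}); [| exact (equipotent_complement _ X Y Hdisj HY)].
    apply equipotent_sym, (equipotent_sig_map _ _ _ _ f); [| auto |].
    + intros t Ht; split; [apply (proj2_sig (e t)) |].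
      intros [t' [Ht' E]]; apply Ht; rewrite <- (Hf _ _ E); exact Ht'.
    + intros x [Hx Hx1]; destruct (Hes (exist S x Hx)) as [t Et].
      assert (Eft : f t = x) by (unfold f; rewrite Et; reflexivity).
      exists t; split; [intros Ht; apply Hx1; exists t; auto | exact Eft].
Qed.

Section Partition.
Variables (T I : Type) (S S1 : T -> Prop) (i : I) (g : T -> I).

Definition graft (x : T) : I :=
  if excluded_middle_informative (S1 x) then i else g x.

Lemma graft_fiber_new :
  (forall x, S1 x -> S x) -> (forall x, S x -> ~ S1 x -> g x <> i) ->
  equipotent {x | S1 x} T -> equipotent {x | S x /\ graft x = i} T.
Proof.
  intros Hsub Hg HS1; apply (equipotent_trans _ {x | S1 x}); [| exact HS1].
  apply equipotent_sig_ext; intros x; unfold graft.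
  destruct (excluded_middle_informative (S1 x)) as [Hx | Hx].
  - split; [intros _; exact Hx | intros _; split; [apply Hsub, Hx | reflexivity]].
  - split; [intros [HSx E]; destruct (Hg x HSx Hx E) | intros H1; contradiction].
Qed.

Lemma graft_fiber_old (q : I) :
  q <> i -> equipotent {x | (S x /\ ~ S1 x) /\ g x = q} T ->
  equipotent {x | S x /\ graft x = q} T.
Proof.
  intros Hqi Hq; apply (equipotent_trans _ {x | (S x /\ ~ S1 x) /\ g x = q}); [| exact Hq].
  apply equipotent_sig_ext; intros x; unfold graft.
  destruct (excluded_middle_informative (S1 x)) as [Hx | Hx]; [| tauto].
  split; [intros [_ E]; destruct (Hqi (eq_sym E)) | tauto].
Qed.

End Partition.

Lemma equipotent_partition (T I : Type) (idx : list I) :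
  forall (Q : I -> Prop) (S : T -> Prop),
  (forall q, Q q -> In q idx) -> (exists q, Q q) ->
  ((exists a b, Q a /\ Q b /\ a <> b) -> two_disjoint_copies T) ->
  equipotent {x | S x} T ->
  exists g : T -> I, (forall x, S x -> Q (g x)) /\
    (forall q, Q q -> equipotent {x | S x /\ g x = q} T).
Proof.
  induction idx as [| i idx IH]; intros Q S Hidx [q0 Hq0] Htwo HS.
  { destruct (Hidx _ Hq0). }
  set (Q' := fun q => Q q /\ q <> i).
  assert (Hidx' : forall q, Q' q -> In q idx).
  { intros q [Hq Hqi]; destruct (Hidx q Hq) as [E | Hin]; [congruence | exact Hin]. }
  assert (Htwo' : (exists a b, Q' a /\ Q' b /\ a <> b) -> two_disjoint_copies T).
  { intros [a [b [Ha [Hb Hab]]]]; apply Htwo; exists a, b.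
    split; [apply Ha | split; [apply Hb | exact Hab]]. }
  destruct (classic (exists q, Q' q)) as [[q1 Hq1] | Honly].
  - destruct (classic (Q i)) as [Hi | Hi].
    + destruct (equipotent_split T S) as [S1 [Hsub [HS1 Hrest]]]; [| exact HS |].
      { apply Htwo; exists i, q1.
        split; [exact Hi | split; [apply Hq1 | apply not_eq_sym, Hq1]]. }
      destruct (IH Q' _ Hidx' (ex_intro _ q1 Hq1) Htwo' Hrest) as [g [Hg Hfib]].
      exists (graft T I S1 i g); split.
      * intros x Hx; unfold graft.
        destruct (excluded_middle_informative (S1 x)) as [_ | H1];
          [exact Hi | apply (Hg x (conj Hx H1))].
      * intros q Hq; destruct (classic (q = i)) as [-> | Hqi].
        -- apply graft_fiber_new; [exact Hsub | | exact HS1].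
           intros x Hx H1; apply (Hg x (conj Hx H1)).
        -- apply graft_fiber_old; [exact Hqi | apply Hfib; split; assumption].
    + destruct (IH Q' S Hidx' (ex_intro _ q1 Hq1) Htwo' HS) as [g [Hg Hfib]].
      exists g; split; [intros x Hx; apply (Hg x Hx) |].
      intros q Hq; apply Hfib; split; [exact Hq | intros ->; contradiction].
  - exists (fun _ => q0); split; [auto |].
    intros q Hq; assert (E : q = q0).
    { apply NNPP; intros Hne; apply Honly.
      destruct (classic (q = i)) as [-> | Hqi]; [exists q0 | exists q]; split; auto. }
    subst q; apply (equipotent_trans _ {x | S x}); [| exact HS].
    apply equipotent_sig_ext; tauto.
Qed.

Section Target.
Variables (V : Poset) (m : V).
Hypotheses (HK : is_K V) (Hp : proper V) (Hm : maximal m)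
  (Hmax : forall u : V, maximal u -> u = m) (Hchain : has_chain (setT V) 1).

Lemma dim_V : dim_le (setT V) 2.
Proof. apply HK. Qed.

Lemma no_chain3 (a b c d : V) : lt a b -> lt b c -> lt c d -> False.
Proof. apply dim2_no_chain3, dim_V. Qed.

(* Every non-maximal node lies strictly below another one, and [m] is the
   only maximal node, so a node not below [m] would start a chain of length 3. *)
Lemma le_m (x : V) : le V x m.
Proof.
  assert (Hup : forall y, ~ le V y m -> exists z, lt y z /\ ~ le V z m).
  { intros y Hy.
    destruct (not_maximal_lt y) as [z Hyz];
      [intros Hmy; apply Hy; rewrite (Hmax y Hmy); apply le_refl |].
    exists z; split; [exact Hyz |].
    intros Hzm; apply Hy, (le_trans V _ z); [apply Hyz | exact Hzm]. }
  apply NNPP; intros Hx.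
  destruct (Hup x Hx) as [y [Hxy Hy]], (Hup y Hy) as [z [Hyz Hz]].
  destruct (Hup z Hz) as [t [Hzt _]].
  exact (no_chain3 _ _ _ _ Hxy Hyz Hzt).
Qed.

Lemma lt_m (x : V) : x <> m -> lt x m.
Proof. intros Hx; split; [apply le_m | exact Hx]. Qed.

Lemma m_not_minimal : ~ minimal m.
Proof.
  destruct Hchain as [[| a [| b [| c s]]] [[Hinc _] Hlen]]; try discriminate.
  intros Hmin; apply (minimal_not_lt _ a Hmin), (lt_le_trans _ b); [apply Hinc | apply le_m].
Qed.

Lemma below_lt_minimal (v x : V) : lt v x -> x <> m -> minimal v.
Proof.
  intros Hvx Hx; apply NNPP; intros Hv; destruct (not_minimal_lt _ Hv) as [t Htv].
  exact (no_chain3 _ _ _ _ Htv Hvx (lt_m x Hx)).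
Qed.

Definition pendant (w x : V) : Prop := between m w x.

Definition is_pendant (x : V) : Prop := exists w, pendant w x.

Definition branching (c : V) : Prop := c <> m /\ two_minimals_below c.

Lemma pendantP (w x : V) :
  pendant w x <-> x <> m /\ lt w x /\ forall v, lt v x -> v = w.
Proof.
  split.
  - intros [Hup Hdown].
    split; [intros E; destruct (proj2 (Hup m) eq_refl) as [_ Hne]; auto |].
    split; [destruct (proj2 (Hdown w) eq_refl) as [Hwx Hne]; split; auto |].
    intros v [Hvx Hne]; apply Hdown; split; auto.
  - intros [Hx [Hwx Hbelow]]; split; intros v; split.
    + intros [Hxv Hne]; apply NNPP; intros Hvm.
      apply (no_chain3 w x v m Hwx); [split; auto | apply lt_m, Hvm].
    + intros ->; split; [apply le_m | auto].
    + intros [Hvx Hne]; apply Hbelow; split; auto.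
    + intros ->; destruct Hwx as [Hwx Hne]; split; auto.
Qed.

Lemma pendant_neq_m (w x : V) : pendant w x -> x <> m.
Proof. intros Hx; apply pendantP in Hx; apply Hx. Qed.

Lemma pendant_lt (w x : V) : pendant w x -> lt w x.
Proof. intros Hx; apply pendantP in Hx; apply Hx. Qed.

Lemma pendant_minimal (w x : V) : pendant w x -> minimal w.
Proof.
  intros Hx; exact (below_lt_minimal w x (pendant_lt _ _ Hx) (pendant_neq_m _ _ Hx)).
Qed.

Lemma pendant_uniq (w w' x : V) : pendant w x -> pendant w' x -> w = w'.
Proof.
  intros Hx Hx'; apply pendantP in Hx as [_ [_ Hbelow]].
  symmetry; apply Hbelow, (pendant_lt _ _ Hx').
Qed.

Lemma pendant_le (w x y : V) : pendant w x -> le V x y -> y = x \/ y = m.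
Proof.
  intros [Hup _] Hxy; destruct (classic (y = x)) as [E | Hne]; [left; exact E |].
  right; apply Hup; split; assumption.
Qed.

Lemma pendant_not_in_H (w x : V) : pendant w x -> ~ in_H x.
Proof.
  intros Hx; apply pendantP in Hx as [_ [Hwx Hbelow]]; rewrite in_HP.
  intros [Hmin | [_ [a [b [Hab [Ha [Hb [Hax Hbx]]]]]]]];
    [exact (minimal_not_lt _ _ Hmin Hwx) |].
  assert (Hlt : forall v, minimal v -> le V v x -> v = w).
  { intros v Hv Hvx; destruct (classic (v = x)) as [-> | Hne].
    - destruct (minimal_not_lt _ _ Hv Hwx).
    - apply Hbelow; split; assumption. }
  apply Hab; rewrite (Hlt a Ha Hax), (Hlt b Hb Hbx); reflexivity.
Qed.

Lemma not_minimal_height_one (x : V) : x <> m -> ~ minimal x -> height_one x.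
Proof.
  intros Hx Hmin; split; [exact Hmin |].
  intros v Hv; exact (below_lt_minimal v x Hv Hx).
Qed.

Lemma not_minimal_pendant (x : V) :
  x <> m -> ~ minimal x -> ~ two_minimals_below x -> is_pendant x.
Proof.
  intros Hx Hmin Htwo; destruct (not_minimal_lt _ Hmin) as [w Hwx].
  exists w; apply pendantP; split; [exact Hx | split; [exact Hwx |]].
  intros v Hvx; apply NNPP; intros Hvw; apply Htwo; exists v, w.
  split; [exact Hvw |].
  split; [exact (below_lt_minimal v x Hvx Hx) |].
  split; [exact (below_lt_minimal w x Hwx Hx) |].
  split; [apply Hvx | apply Hwx].
Qed.

Lemma Lambda_in_Hstar (l : V) : Lambda m l -> in_Hstar m l.
Proof. intros [[_ Hl] | [Hl _]]; exact Hl. Qed.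

Lemma Lambda_cases (l : V) :
  Lambda m l -> l <> m /\ (minimal l \/ two_minimals_below l).
Proof.
  intros Hl; destruct (Lambda_in_Hstar l Hl) as [Hin Hne].
  apply in_HP in Hin; split; [exact Hne | tauto].
Qed.

Lemma branching_in_Hstar (c : V) : branching c -> height c 1 /\ in_Hstar m c.
Proof.
  intros [Hc Htwo].
  assert (H1 : height c 1).
  { apply height_oneP, not_minimal_height_one;
      [exact Hc | apply two_minimals_below_not_minimal, Htwo]. }
  split; [exact H1 | split; [right; split; [exact H1 | exact Htwo] | exact Hc]].
Qed.

Lemma Lambda_branching (c : V) : branching c -> Lambda m c.
Proof. intros Hc; left; apply branching_in_Hstar, Hc. Qed.

Lemma height1_Hstar_branching (c : V) : height c 1 -> in_Hstar m c -> branching c.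
Proof.
  intros H1 [[Hmin | [_ Htwo]] Hc]; [destruct (height1_not_minimal _ H1 Hmin) |].
  split; [exact Hc | exact Htwo].
Qed.

Lemma Lambda_above (w : V) : minimal w -> exists l, Lambda m l /\ le V w l.
Proof.
  intros Hw; destruct (classic (exists c, le V w c /\ branching c)) as [[c [Hwc Hc]] | Hno].
  - exists c; split; [apply Lambda_branching, Hc | exact Hwc].
  - exists w; split; [| apply le_refl].
    right; split; [split; [left; exact Hw | intros ->; apply m_not_minimal, Hw] |].
    intros [c [Hwc [H1 Hc]]]; apply Hno; exists c.
    split; [exact Hwc | apply height1_Hstar_branching; assumption].
Qed.

Lemma pendant_not_Lambda (w x : V) : pendant w x -> ~ Lambda m x.
Proof.
  intros Hx Hl; apply (pendant_not_in_H w x Hx), (Lambda_in_Hstar x Hl).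
Qed.

Lemma pendant_not_below_Lambda (w x l : V) : pendant w x -> Lambda m l -> ~ le V x l.
Proof.
  intros Hx Hl Hxl; destruct (pendant_le _ _ _ Hx Hxl) as [-> | ->].
  - exact (pendant_not_Lambda _ _ Hx Hl).
  - exact (proj1 (Lambda_cases _ Hl) eq_refl).
Qed.

Lemma branching_mub (c a b : V) :
  branching c -> a <> b -> minimal a -> minimal b -> le V a c -> le V b c ->
  mub (fun z => z = a \/ z = b) c.
Proof.
  intros [Hc _] Hab Ha Hb Hac Hbc; split; [intros z [-> | ->]; assumption |].
  intros y Hy Hyc; apply NNPP; intros Hne.
  assert (Hay : lt a y).
  { split; [apply Hy; left; reflexivity |].
    intros <-; apply Hab, eq_sym, Ha, Hy; right; reflexivity. }
  exact (no_chain3 _ _ _ _ Hay (conj Hyc Hne) (lt_m c Hc)).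
Qed.

(* A branching node of [Lambda] is a minimal upper bound of two of the
   finitely many minimal nodes. *)
Lemma finite_Lambda : finite_set (Lambda m).
Proof.
  destruct HK as [_ [[mins Hmins] [_ [Hmub _]]]].
  set (M := fun a b x : V =>
         a <> b /\ minimal a /\ minimal b /\ mub (fun z => z = a \/ z = b) x).
  apply (finite_sub _ (fun x => minimal x \/
                       exists a, In a mins /\ (fun a x => exists b, In b mins /\ M a b x) a x)).
  - intros l Hl; destruct (Lambda_cases _ Hl) as [Hlm [Hmin | Htwo]];
      [left; exact Hmin | right].
    pose proof Htwo as [a [b [Hab [Ha [Hb [Hal Hbl]]]]]].
    exists a; split; [apply Hmins, Ha |]; exists b; split; [apply Hmins, Hb |].
    split; [exact Hab | split; [exact Ha | split; [exact Hb |]]].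
    apply branching_mub; [split |..]; assumption.
  - apply finite_union; [exists mins; exact Hmins |].
    apply finite_bigunion; intros a _; apply finite_bigunion; intros b _.
    destruct (classic (a <> b /\ minimal a /\ minimal b)) as [[Hab [Ha Hb]] | Hno].
    + apply (finite_sub _ _ (fun x Hx => proj2 (proj2 (proj2 Hx))) (Hmub a b Ha Hb Hab)).
    + apply finite_empty; intros x [Hab [Ha [Hb _]]]; apply Hno; auto.
Qed.

Lemma pendant_infinite (w c : V) : lt w c -> lt c m -> ~ finite_set (pendant w).
Proof. intros Hwc Hcm; exact (proj2 (proj2 (proj2 (proj2 HK))) m c w Hcm Hwc). Qed.

Lemma pendant_exists (w c : V) : lt w c -> c <> m -> exists x, pendant w x.
Proof.
  intros Hwc Hc; apply NNPP; intros Hno.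
  apply (pendant_infinite w c Hwc (lt_m c Hc)), finite_empty.
  intros x Hx; apply Hno; exists x; exact Hx.
Qed.

Lemma pendant_equipotent (w : V) :
  (exists x, pendant w x) -> equipotent {x | pendant w x} V.
Proof.
  intros [x Hx]; destruct (Hp m w Hm (pendant_minimal _ _ Hx)) as [Hempty | Heq];
    [destruct (Hempty x Hx) | exact Heq].
Qed.

Lemma V_infinite (w : V) : (exists x, pendant w x) -> ~ finite_set (setT V).
Proof.
  intros [x Hx] Hfin.
  apply (pendant_infinite w x (pendant_lt _ _ Hx) (lt_m x (pendant_neq_m _ _ Hx))).
  exact (finite_sub _ _ (fun _ _ => I) Hfin).
Qed.

Lemma branching_two_copies (c : V) : branching c -> two_disjoint_copies V.
Proof.
  intros [Hc Htwo]; pose proof Htwo as [a [b [Hab [Ha [Hb [Hac Hbc]]]]]].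
  assert (Hlt : forall v, minimal v -> le V v c -> lt v c).
  { intros v Hv Hvc; split; [exact Hvc |].
    intros ->; exact (two_minimals_below_not_minimal _ Htwo Hv). }
  exists (pendant a), (pendant b); split.
  - intros x Hxa Hxb; exact (Hab (pendant_uniq _ _ _ Hxa Hxb)).
  - split; apply pendant_equipotent, (pendant_exists _ c); auto.
Qed.

(* Two distinct nodes of [Lambda] above the minimal node [w] cannot both be
   minimal, so one of them is branching and supplies two disjoint copies. *)
Lemma pendant_assignment (w : V) : (exists x, pendant w x) ->
  exists g : V -> V, (forall x, pendant w x -> Lambda m (g x) /\ le V w (g x)) /\
    (forall l, Lambda m l -> le V w l -> equipotent {x | pendant w x /\ g x = l} V).
Proof.
  intros Hw.
  assert (Hwmin : minimal w) by (destruct Hw as [x Hx]; exact (pendant_minimal _ _ Hx)).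
  destruct finite_Lambda as [lams Hlams].
  destruct (equipotent_partition V V lams (fun l => Lambda m l /\ le V w l) (pendant w))
    as [g [Hg Hfib]].
  - intros l [Hl _]; apply Hlams, Hl.
  - apply Lambda_above, Hwmin.
  - intros [a [b [[Ha Hwa] [[Hb Hwb] Hab]]]].
    destruct (Lambda_cases _ Ha) as [Ham [Hamin | Hatwo]];
      [| apply (branching_two_copies a); split; assumption].
    destruct (Lambda_cases _ Hb) as [Hbm [Hbmin | Hbtwo]];
      [| apply (branching_two_copies b); split; assumption].
    destruct Hab; rewrite <- (Hamin w Hwa); exact (Hbmin w Hwb).
  - apply pendant_equipotent, Hw.
  - exists g; split; [exact Hg | intros l Hl Hwl; apply Hfib; split; assumption].
Qed.

Definition balanced_assignment (asg : V -> V) : Prop :=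
  (forall w x, pendant w x -> Lambda m (asg x) /\ le V w (asg x)) /\
  (forall w l, Lambda m l -> le V w l -> (exists x, pendant w x) ->
     equipotent {x | pendant w x /\ asg x = l} V).

Lemma balanced_assignment_exists : exists asg, balanced_assignment asg.
Proof.
  destruct (choice (fun w g => (exists x, pendant w x) ->
      (forall x, pendant w x -> Lambda m (g x) /\ le V w (g x)) /\
      (forall l, Lambda m l -> le V w l -> equipotent {x | pendant w x /\ g x = l} V)))
    as [G HG].
  { intros w; destruct (classic (exists x, pendant w x)) as [Hw | Hw].
    - destruct (pendant_assignment w Hw) as [g Hg]; exists g; intros _; exact Hg.
    - exists (fun x => x); intros Hw'; contradiction. }
  destruct (choice (fun x w => is_pendant x -> pendant w x)) as [base Hbase].
  { intros x; destruct (classic (is_pendant x)) as [[w Hw] | Hx];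
      [exists w; intros _; exact Hw | exists x; intros Hx'; contradiction]. }
  assert (Ebase : forall w x, pendant w x -> base x = w).
  { intros w x Hx; apply (pendant_uniq _ _ x); [apply Hbase; exists w |]; exact Hx. }
  exists (fun x => G (base x) x); split.
  - intros w x Hx; rewrite (Ebase w x Hx); apply (HG w (ex_intro _ x Hx)), Hx.
  - intros w l Hl Hwl Hw.
    apply (equipotent_trans _ {x | pendant w x /\ G w x = l}); [| apply HG; assumption].
    apply equipotent_sig_ext; intros x.
    split; intros [Hx E]; rewrite (Ebase w x Hx) in *; split; assumption.
Qed.

Definition Vm : Poset := subposet V (fun x => x <> m).
Definition Lm : Type := {l : V | Lambda m l}.

Lemma Vm_le (a b : Vm) : le V (proj1_sig a) (proj1_sig b) <-> le Vm a b.
Proof. reflexivity. Qed.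

Lemma Vm_down (a : Vm) (v : V) : le V v (proj1_sig a) -> exists b : Vm, v = proj1_sig b.
Proof.
  intros Hv; assert (Hvm : v <> m).
  { intros ->; apply (proj2_sig a), Hm, Hv. }
  exists (exist _ v Hvm); reflexivity.
Qed.

Section Splitting.
Variable asg : V -> V.
Hypothesis Hasg : balanced_assignment asg.
Variable l0 : Lm.

(* [below_copy l x]: [x] lies below the copy [m_l] of [m]. *)
Definition below_copy (l x : V) : Prop := le V x l \/ is_pendant x /\ asg x = l.

Lemma below_copy_down (l a b : V) : le V a b -> below_copy l b -> below_copy l a.
Proof.
  intros Hab [Hbl | [[w Hw] E]]; [left; apply (le_trans V _ b); assumption |].
  destruct (classic (a = b)) as [-> | Hne]; [right; split; [exists w |]; assumption |].
  left; apply pendantP in Hw as Hw'; destruct Hw' as [_ [_ Hbelow]].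
  rewrite <- E, (Hbelow a (conj Hab Hne)); apply (proj1 Hasg _ _ Hw).
Qed.

(* The splitting: the nodes of [V] other than [m], and a copy [inr l] of [m]
   for each [l] in Lambda. *)
Definition leU (u v : Vm + Lm) : Prop :=
  match u, v with
  | inl a, inl b => le Vm a b
  | inl a, inr l => below_copy (proj1_sig l) (proj1_sig a)
  | inr _, inl _ => False
  | inr l, inr l' => l = l'
  end.

Lemma leU_refl (u : Vm + Lm) : leU u u.
Proof. destruct u; simpl; [apply le_refl | reflexivity]. Qed.

Lemma leU_antisym (u v : Vm + Lm) : leU u v -> leU v u -> u = v.
Proof.
  destruct u as [a | l], v as [b | l']; simpl; try contradiction.
  - intros Hab Hba; f_equal; apply le_antisym; assumption.
  - intros -> _; reflexivity.
Qed.

Lemma leU_trans (u v w : Vm + Lm) : leU u v -> leU v w -> leU u w.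
Proof.
  destruct u as [a | l], v as [b | l'], w as [c | l'']; simpl; try contradiction.
  - apply le_trans.
  - apply below_copy_down.
  - intros Hal <-; exact Hal.
  - intros -> ->; reflexivity.
Qed.

Definition U : Poset :=
  {| car := (Vm + Lm)%type; le := leU; le_refl := leU_refl;
     le_antisym := leU_antisym; le_trans := leU_trans |}.

Definition phi (u : U) : V := match u with inl a => proj1_sig a | inr _ => m end.

Definition is_copy (u : U) : Prop := match u with inl _ => False | inr _ => True end.

Lemma inl_le (a b : Vm) : le U (inl a) (inl b) <-> le Vm a b.
Proof. reflexivity. Qed.

Lemma inl_down (a : Vm) (u : U) : le U u (inl a) -> exists b, u = inl b.
Proof. destruct u as [b | l]; simpl; [exists b; reflexivity | contradiction]. Qed.

Lemma inl_lt (a b : Vm) : lt (inl a : U) (inl b) <-> lt (proj1_sig a) (proj1_sig b).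
Proof.
  rewrite (embed_lt inl_le); symmetry; exact (embed_lt Vm_le a b).
Qed.

Lemma inl_minimal (a : Vm) : minimal (inl a : U) <-> minimal (proj1_sig a).
Proof.
  rewrite (embed_minimal inl_le inl_down); symmetry; exact (embed_minimal Vm_le Vm_down a).
Qed.

Lemma inl_height1 (a : Vm) : height (inl a : U) 1 <-> height (proj1_sig a) 1.
Proof.
  rewrite (embed_height1 inl_le inl_down); symmetry; exact (embed_height1 Vm_le Vm_down a).
Qed.

Lemma inl_in_H (a : Vm) : in_H (inl a : U) <-> in_H (proj1_sig a).
Proof.
  rewrite (embed_in_H inl_le inl_down); symmetry; exact (embed_in_H Vm_le Vm_down a).
Qed.

Lemma phi_strict (u v : U) : lt u v -> lt (phi u) (phi v).
Proof.
  intros [Huv Hne]; destruct u as [a | l], v as [b | l']; simpl in *; try contradiction.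
  - split; [exact Huv | intros E; apply Hne; f_equal; apply sig_eq, E].
  - exact (lt_m _ (proj2_sig a)).
  - destruct (Hne (f_equal inr Huv)).
Qed.

Lemma dim_U : dim_le (setT U) 2.
Proof. exact (dim_le_strict_mono U V phi 2 phi_strict dim_V). Qed.

Lemma copy_maximal (l : Lm) : maximal (inr l : U).
Proof. intros [a | l'] Hl; simpl in Hl; [contradiction | rewrite Hl; reflexivity]. Qed.

Definition node_of_Lambda (l : Lm) : Vm :=
  exist _ (proj1_sig l) (proj1 (Lambda_cases _ (proj2_sig l))).

Lemma node_below_copy (l : Lm) : le U (inl (node_of_Lambda l)) (inr l).
Proof. left; apply le_refl. Qed.

Lemma copy_not_minimal (l : Lm) : ~ minimal (inr l : U).
Proof. intros Hl; discriminate (Hl _ (node_below_copy l)). Qed.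

Lemma copy_above (a : Vm) : exists l : Lm, le U (inl a) (inr l).
Proof.
  destruct (classic (minimal (proj1_sig a))) as [Hmin | Hmin].
  - destruct (Lambda_above _ Hmin) as [l [Hl Hal]]; exists (exist _ l Hl); left; exact Hal.
  - destruct (classic (two_minimals_below (proj1_sig a))) as [Htwo | Htwo].
    + exists (exist _ _ (Lambda_branching _ (conj (proj2_sig a) Htwo))); left; apply le_refl.
    + destruct (not_minimal_pendant _ (proj2_sig a) Hmin Htwo) as [w Hw].
      exists (exist _ _ (proj1 (proj1 Hasg _ _ Hw))).
      right; split; [exists w; exact Hw | reflexivity].
Qed.

Lemma maximal_copy (u : U) : maximal u -> exists l, u = inr l.
Proof.
  destruct u as [a | l]; intros Hu; [| exists l; reflexivity].
  destruct (copy_above a) as [l Hl]; discriminate (Hu _ Hl).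
Qed.

Lemma minimal_node (u : U) : minimal u -> exists a, u = inl a /\ minimal (proj1_sig a).
Proof.
  destruct u as [a | l]; intros Hu; [| destruct (copy_not_minimal l Hu)].
  exists a; split; [reflexivity | apply inl_minimal, Hu].
Qed.

Lemma pendant_below_copy (w : V) (x : Vm) (l : Lm) :
  pendant w (proj1_sig x) -> le U (inl x) (inr l) <-> asg (proj1_sig x) = proj1_sig l.
Proof.
  intros Hx; split.
  - intros [Hxl | [_ E]]; [| exact E].
    destruct (pendant_not_below_Lambda _ _ _ Hx (proj2_sig l) Hxl).
  - intros E; right; split; [exists w; exact Hx | exact E].
Qed.

Lemma between_copy_node (l : Lm) (a : Vm) (u : U) :
  between (inr l : U) (inl a) u -> exists x, u = inl x.
Proof.
  intros [Hup _]; destruct u as [x | l']; [exists x; reflexivity |].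
  destruct (proj2 (Hup (inr l)) eq_refl) as [E Hne]; destruct (Hne (f_equal inr (eq_sym E))).
Qed.

Lemma between_copy_pendant (l : Lm) (a x : Vm) :
  between (inr l : U) (inl a) (inl x) ->
  pendant (proj1_sig a) (proj1_sig x) /\ asg (proj1_sig x) = proj1_sig l.
Proof.
  intros [Hup Hdown].
  assert (Hx : pendant (proj1_sig a) (proj1_sig x)).
  { apply pendantP; split; [exact (proj2_sig x) | split].
    - apply inl_lt; destruct (proj2 (Hdown (inl a)) eq_refl) as [Hax Hne]; split; auto.
    - intros v Hv; destruct (Vm_down x v (proj1 Hv)) as [b ->].
      assert (E : (inl b : U) = inl a).
      { apply Hdown; split; [apply Hv |].
        intros E; injection E as E; apply (proj2 Hv); rewrite E; reflexivity. }
      injection E as ->; reflexivity. }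
  split; [exact Hx |].
  apply (pendant_below_copy _ x l Hx), (proj2 (Hup (inr l)) eq_refl).
Qed.

Lemma pendant_between_copy (l : Lm) (a x : Vm) :
  pendant (proj1_sig a) (proj1_sig x) -> asg (proj1_sig x) = proj1_sig l ->
  between (inr l : U) (inl a) (inl x).
Proof.
  intros Hx E; pose proof Hx as Hx'; apply pendantP in Hx' as [_ [Hax Hbelow]].
  split; intros [y | l']; split.
  - intros [Hxy Hne]; destruct (pendant_le _ _ (proj1_sig y) Hx Hxy) as [Ey | Ey].
    + destruct Hne; f_equal; apply sig_eq, Ey.
    + destruct (proj2_sig y Ey).
  - discriminate.
  - intros [Hxl _]; f_equal; apply sig_eq; rewrite <- E.
    symmetry; apply (pendant_below_copy _ x l' Hx), Hxl.
  - injection 1 as ->; split; [apply (pendant_below_copy _ x l Hx), E | discriminate].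
  - intros [Hyx Hne]; f_equal; apply sig_eq, Hbelow; split; [exact Hyx |].
    intros Ey; apply Hne; f_equal; apply sig_eq, Ey.
  - injection 1 as ->; split; [apply Hax |].
    intros Ex; injection Ex as Ex; apply (proj2 Hax); rewrite Ex; reflexivity.
  - intros [[] _].
  - discriminate.
Qed.

Lemma between_copy_equipotent (l : Lm) (a : Vm) :
  le V (proj1_sig a) (proj1_sig l) -> (exists x, pendant (proj1_sig a) x) ->
  equipotent {u | between (inr l : U) (inl a) u} V.
Proof.
  intros Hal Ha.
  apply (equipotent_trans _ {x | pendant (proj1_sig a) x /\ asg x = proj1_sig l});
    [| exact (proj2 Hasg _ _ (proj2_sig l) Hal Ha)].
  apply (equipotent_sig_map _ _ _ _ phi).
  - intros u Hu; destruct (between_copy_node _ _ _ Hu) as [x ->].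
    exact (between_copy_pendant _ _ _ Hu).
  - intros u v Hu Hv; destruct (between_copy_node _ _ _ Hu) as [x ->].
    destruct (between_copy_node _ _ _ Hv) as [y ->].
    intros E; f_equal; apply sig_eq, E.
  - intros x [Hx E]; exists (inl (exist _ x (pendant_neq_m _ _ Hx))).
    split; [apply pendant_between_copy; assumption | reflexivity].
Qed.

(* [V] injects into a pendant set [[m/w]], hence into the nodes of [U]; and [U]
   injects back into [V], pendant sets and [Lambda] being disjoint. *)
Lemma V_equipotent_U : (exists w x, pendant w x) -> equipotent V U.
Proof.
  intros [w [x Hx]].
  destruct (equipotent_sym _ _ (pendant_equipotent w (ex_intro _ x Hx))) as [e [He _]].
  apply (schroeder_bernstein _ _
           (fun v => inl (exist _ (proj1_sig (e v)) (pendant_neq_m _ _ (proj2_sig (e v)))) : U)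
           (fun u : U => match u with
                         | inl a => proj1_sig (e (proj1_sig a))
                         | inr l => proj1_sig l
                         end)).
  - intros v v' E; injection E as E; apply He, sig_eq, E.
  - intros [a | l] [b | l'] E; simpl in E.
    + f_equal; apply sig_eq, He, sig_eq, E.
    + destruct (pendant_not_Lambda _ _ (proj2_sig (e (proj1_sig a)))).
      rewrite E; apply (proj2_sig l').
    + destruct (pendant_not_Lambda _ _ (proj2_sig (e (proj1_sig b)))).
      rewrite <- E; apply (proj2_sig l).
    + f_equal; apply sig_eq, E.
Qed.

Lemma proper_U : proper U.
Proof.
  intros u w Hu Hw.
  destruct (maximal_copy u Hu) as [l ->], (minimal_node w Hw) as [a [-> _]].
  destruct (classic (exists y, between (inr l : U) (inl a) y)) as [[y Hy] | Hno];
    [right | left; intros y Hy; apply Hno; exists y; exact Hy].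
  destruct (between_copy_node _ _ _ Hy) as [x ->].
  destruct (between_copy_pendant _ _ _ Hy) as [Hx E].
  apply (equipotent_trans _ V).
  - apply between_copy_equipotent; [| exists (proj1_sig x); exact Hx].
    rewrite <- E; exact (proj2 (proj1 Hasg _ _ Hx)).
  - apply V_equipotent_U; exists (proj1_sig a), (proj1_sig x); exact Hx.
Qed.

Lemma chain_below_copy (l : Lm) (a c : Vm) :
  lt (inl a : U) (inl c) -> le U (inl c) (inr l) ->
  le V (proj1_sig a) (proj1_sig l) /\ exists x, pendant (proj1_sig a) x.
Proof.
  intros Hac Hcl; apply inl_lt in Hac.
  destruct Hcl as [Hcl | [[w Hw] E]].
  - destruct (classic (proj1_sig c = proj1_sig l)) as [E | Hne].
    + rewrite <- E; split; [apply Hac | exact (pendant_exists _ _ Hac (proj2_sig c))].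
    + destruct (no_chain3 _ _ _ _ Hac (conj Hcl Hne)
                  (lt_m _ (proj1 (Lambda_cases _ (proj2_sig l))))).
  - pose proof Hw as Hw'; apply pendantP in Hw' as [_ [_ Hbelow]].
    rewrite <- (Hbelow _ Hac) in Hw.
    split; [rewrite <- E; exact (proj2 (proj1 Hasg _ _ Hw)) | exists (proj1_sig c); exact Hw].
Qed.

Lemma between_U_infinite (u v w : U) : lt v u -> lt w v -> ~ finite_set (between u w).
Proof.
  intros Hvu Hwv.
  destruct u as [c | l].
  { destruct (no_chain3 _ _ _ _ (phi_strict _ _ Hwv) (phi_strict _ _ Hvu)
                (lt_m _ (proj2_sig c))). }
  destruct v as [c | l']; [| destruct Hvu as [E Hne]; destruct (Hne (f_equal inr E))].
  destruct w as [a | l'']; [| destruct Hwv as [[] _]].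
  destruct (chain_below_copy l a c Hwv (proj1 Hvu)) as [Hal Ha].
  intros Hfin; apply (V_infinite _ Ha).
  exact (finite_full_of_equipotent _ (between_copy_equipotent l a Hal Ha) Hfin).
Qed.

(* Partial inverses of [proj1_sig] into [U]; the value [inr l0] elsewhere is
   junk. *)
Definition node_of (v : V) : U :=
  match excluded_middle_informative (v = m) with
  | left _ => inr l0
  | right Hv => inl (exist _ v Hv)
  end.

Lemma node_of_val (a : Vm) : node_of (proj1_sig a) = inl a.
Proof.
  unfold node_of; destruct (excluded_middle_informative (proj1_sig a = m)) as [E | Hne].
  - destruct (proj2_sig a E).
  - f_equal; apply sig_eq; reflexivity.
Qed.

Definition copy_of (v : V) : U :=
  match excluded_middle_informative (Lambda m v) with
  | left Hv => inr (exist _ v Hv)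
  | right _ => inr l0
  end.

Lemma copy_of_val (l : Lm) : copy_of (proj1_sig l) = inr l.
Proof.
  unfold copy_of; destruct (excluded_middle_informative (Lambda m (proj1_sig l))) as [Hl | Hl].
  - f_equal; apply sig_eq; reflexivity.
  - destruct (Hl (proj2_sig l)).
Qed.

Lemma finite_nodes (A : V -> Prop) (B : U -> Prop) :
  (forall u, B u -> exists a, u = inl a /\ A (proj1_sig a)) -> finite_set A -> finite_set B.
Proof.
  intros HB; apply (finite_image A B node_of).
  intros u Hu; destruct (HB u Hu) as [a [-> Ha]].
  exists (proj1_sig a); split; [exact Ha | apply node_of_val].
Qed.

Lemma finite_copies (B : U -> Prop) : (forall u, B u -> exists l, u = inr l) -> finite_set B.
Proof.
  intros HB; apply (finite_image (Lambda m) B copy_of); [| exact finite_Lambda].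
  intros u Hu; destruct (HB u Hu) as [l ->].
  exists (proj1_sig l); split; [exact (proj2_sig l) | apply copy_of_val].
Qed.

Lemma mub_nodes (a b c : Vm) :
  mub (fun z : U => z = inl a \/ z = inl b) (inl c) ->
  mub (fun z => z = proj1_sig a \/ z = proj1_sig b) (proj1_sig c).
Proof.
  intros [Hub Hmin]; split.
  - intros z [-> | ->];
      [exact (Hub (inl a) (or_introl eq_refl)) | exact (Hub (inl b) (or_intror eq_refl))].
  - intros y Hy Hyc; destruct (Vm_down c y Hyc) as [y' ->].
    assert (E : (inl y' : U) = inl c).
    { apply Hmin; [intros z [-> | ->]; apply Hy; auto | exact Hyc]. }
    injection E as ->; reflexivity.
Qed.

Lemma finite_mub_U (u v : U) : minimal u -> minimal v -> u <> v ->
  finite_set (mub (fun z => z = u \/ z = v)).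
Proof.
  intros Hu Hv Huv.
  destruct (minimal_node u Hu) as [a [-> Ha]], (minimal_node v Hv) as [b [-> Hb]].
  assert (Hab : proj1_sig a <> proj1_sig b).
  { intros E; apply Huv; f_equal; apply sig_eq, E. }
  apply (finite_sub _ (fun z : U =>
                         (exists c, z = inl c /\ mub (fun z : U => z = inl a \/ z = inl b) z)
                                \/ (exists l, z = inr l))).
  - intros [c | l] Hz; [left; exists c | right; exists l]; [split; [reflexivity | exact Hz] |].
    reflexivity.
  - apply finite_union; [| apply finite_copies; auto].
    apply (finite_nodes (mub (fun z => z = proj1_sig a \/ z = proj1_sig b))).
    + intros z [c [-> Hc]]; exists c; split; [reflexivity | apply mub_nodes, Hc].
    + exact (proj1 (proj2 (proj2 (proj2 HK))) _ _ Ha Hb Hab).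
Qed.

Lemma height2_copy (u : U) : height u 2 -> exists l, u = inr l.
Proof.
  intros Hu; apply (height2P u dim_U) in Hu as [p [q [Hpq Hqu]]].
  destruct u as [c | l]; [| exists l; reflexivity].
  destruct (no_chain3 _ _ _ _ (phi_strict _ _ Hpq) (phi_strict _ _ Hqu) (lt_m _ (proj2_sig c))).
Qed.

Lemma is_K_U : is_K U.
Proof.
  split; [exact dim_U |]. split; [| split; [| split]].
  - apply (finite_nodes minimal); [exact minimal_node | apply HK].
  - apply finite_copies, height2_copy.
  - exact finite_mub_U.
  - exact between_U_infinite.
Qed.

Lemma copy_maximal_pos (u : U) : is_copy u -> maximal u /\ pos_height u.
Proof.
  destruct u as [a | l]; [intros [] | intros _].
  split; [apply copy_maximal | exact (pos_height_not_minimal _ dim_U (copy_not_minimal l))].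
Qed.

Lemma phi_mono (u v : U) : le U u v -> le V (phi u) (phi v).
Proof.
  destruct u as [a | l], v as [b | l']; simpl;
    [auto | intros _; apply le_m | contradiction | intros _; apply le_refl].
Qed.

Lemma phi_surjective (y : V) : exists u, phi u = y.
Proof.
  destruct (classic (y = m)) as [-> | Hy]; [exists (inr l0) | exists (inl (exist _ y Hy))];
    reflexivity.
Qed.

Lemma phi_m (u : U) : phi u = m <-> is_copy u.
Proof.
  destruct u as [a | l]; simpl; split;
    [intros E; exact (proj2_sig a E) | contradiction | auto | auto].
Qed.

Lemma phi_node (v : V) : v <> m -> exists u, forall u', phi u' = v <-> u' = u.
Proof.
  intros Hv; exists (inl (exist _ v Hv)); intros [b | l]; simpl; split.
  - intros E; f_equal; apply sig_eq, E.
  - intros E; injection E as ->; reflexivity.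
  - intros E; destruct (Hv (eq_sym E)).
  - discriminate.
Qed.

Lemma phi_lift (u : U) (y : V) : le V (phi u) y -> exists u', le U u u' /\ phi u' = y.
Proof.
  intros Huy; destruct (classic (y = m)) as [-> | Hy].
  - destruct u as [a | l]; [destruct (copy_above a) as [l Hl]; exists (inr l) | exists (inr l)];
      split; [exact Hl | reflexivity | apply le_refl | reflexivity].
  - destruct u as [a | l]; [exists (inl (exist _ y Hy)); split; [exact Huy | reflexivity] |].
    destruct (Hy (Hm y Huy)).
Qed.

Lemma splitting_U : is_splitting V m U is_copy phi.
Proof.
  split; [exact Hm |].
  split; [exact (pos_height_not_minimal m dim_V m_not_minimal) |].
  split; [apply finite_copies; intros [a | l] Hu; [destruct Hu | exists l; reflexivity] |].
  split; [exists (inr l0); exact I |].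
  split; [exact copy_maximal_pos |].
  split; [exact phi_mono |].
  split; [exact phi_surjective |].
  split; [exact phi_m |].
  split; [exact phi_node | exact phi_lift].
Qed.

Lemma Lposet_in_H (u : U) (y : Lposet u) : in_H y <-> in_H (proj1_sig y).
Proof. symmetry; exact (embed_in_H (Lposet_le U u) (Lposet_down U u) y). Qed.

Lemma Lposet_height1 (u : U) (y : Lposet u) : height y 1 <-> height (proj1_sig y) 1.
Proof. symmetry; exact (embed_height1 (Lposet_le U u) (Lposet_down U u) y). Qed.

(* The pendant nodes attached to [m_l] are not in H. *)
Lemma copy_Hstar_node (l : Lm) (y : Lposet (inr l : U)) :
  in_Hstar (Ltop (inr l : U)) y ->
  exists c, proj1_sig y = inl c /\ le V (proj1_sig c) (proj1_sig l) /\ in_H (proj1_sig c).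
Proof.
  destruct y as [[c | l'] Hy]; intros [Hin Hne]; apply Lposet_in_H in Hin; simpl in *.
  - apply inl_in_H in Hin; exists c; split; [reflexivity | split; [| exact Hin]].
    clear Hne; destruct Hy as [Hcl | [[w Hw] _]]; [exact Hcl |].
    destruct (pendant_not_in_H _ _ Hw Hin).
  - subst l'; destruct Hne; apply sig_eq; reflexivity.
Qed.

Lemma copy_d_eq1 (l : Lm) : d_eq1 (Ltop (inr l : U)).
Proof.
  set (z := exist (Lset (inr l : U)) (inl (node_of_Lambda l)) (node_below_copy l)
            : Lposet (inr l : U)).
  assert (Hl := Lambda_in_Hstar _ (proj2_sig l)).
  apply (Lambda_singleton _ z).
  - split; [apply Lposet_in_H, inl_in_H, Hl |].
    intros E; discriminate (f_equal (@proj1_sig _ _) E).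
  - intros y Hy; destruct (copy_Hstar_node l y Hy) as [c [Ey [Hcl _]]].
    destruct y as [y Hy']; simpl in Ey; subst y; exact Hcl.
  - destruct (Lambda_cases _ (proj2_sig l)) as [Hlm [Hmin | Htwo]]; [right | left].
    + intros [w [_ [Hw1 Hw]]]; destruct (copy_Hstar_node l w Hw) as [c [Ew [Hcl _]]].
      apply Lposet_height1 in Hw1; rewrite Ew in Hw1; apply inl_height1 in Hw1.
      apply (height1_not_minimal _ Hw1); rewrite (Hmin _ Hcl); exact Hmin.
    + apply Lposet_height1, inl_height1, branching_in_Hstar; split; assumption.
Qed.

End Splitting.

Lemma balanced_splitting_exists : (exists l, Lambda m l) ->
  exists (U : Poset) (M : U -> Prop) (phi : U -> V),
    is_K U /\ proper U /\ is_splitting V m U M phi /\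
    (forall mi : U, M mi -> d_eq1 (Ltop mi)).
Proof.
  intros [l0 Hl0]; destruct balanced_assignment_exists as [asg Hasg].
  exists (U asg Hasg), (is_copy asg Hasg), (phi asg Hasg).
  split; [exact (is_K_U asg Hasg (exist _ l0 Hl0)) |].
  split; [exact (proper_U asg Hasg) |].
  split; [exact (splitting_U asg Hasg (exist _ l0 Hl0)) |].
  intros [a | l] Hl; [destruct Hl | exact (copy_d_eq1 asg Hasg l)].
Qed.

End Target.

Theorem theorem4p8 (V : Poset) (m : V) :
  is_K V -> proper V ->
  maximal m -> (forall u : V, maximal u -> u = m) ->
  has_chain (setT V) 1 ->
  d_gt1 m ->
  exists (U : Poset) (M : U -> Prop) (phi : U -> V),
    is_K U /\ proper U /\ is_splitting V m U M phi /\
    (forall mi : U, M mi -> d_eq1 (Ltop mi)).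
Proof.
  intros HK Hp Hm Hmax Hchain [l [_ [_ [Hl _]]]].
  exact (balanced_splitting_exists V m HK Hp Hm Hmax Hchain (ex_intro _ l Hl)).
Qed.
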